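(* Let $t<u$ be $b$-imal numbers in $[0,1]$ and let $l'\ge0$ be such that $b^{l'}t$ and $b^{l'}u$ are integers. Then for every $k\ge l'$, $\mu_k([t,u))=b(u-t)$. Moreover, for every interval $I\subset[0,1)$, $\lim_{k\to\infty}\mu_k(I)=b\,|I|$, where $|I|=\sup I-\inf I$.
   Context: Fix $b\ge2$ and $d\in\{0,\dots,b-1\}$. A $b$-imal number is an element of $\bigcup_{l\ge0}b^{-l}\mathbb Z$. A string is a finite sequence $X=(d_l,\dots,d_1)$ of digits in $\{0,\dots,b-1\}$ (leading zeros allowed), of length $|X|=l\ge0$; its value is $n(X)=\sum_{i=1}^{l}d_ib^{i-1}$ ($0$ for the empty string). For $k\ge0$, $\mu_k=\sum_{X}b^{-|X|}\delta_{n(X)/b^{|X|}}$, the sum over all strings $X$ containing $d$ exactly $k$ times (masses at the same point add); it is a measure on $[0,1)$ of total mass $b$. *)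

From HB Require Import structures.
From mathcomp Require Import all_boot all_order all_algebra.
From mathcomp Require Import all_classical all_reals all_analysis.
Set Implicit Arguments. Unset Strict Implicit. Unset Printing Implicit Defensive.
Import Order.TTheory GRing.Theory Num.Theory.
Local Open Scope ring_scope.
Local Open Scope classical_set_scope.

(* A string of length l over the digits {0,..,b-1} is X = (d_l, ..., d_1),
   represented as an l-tuple whose i-th entry (i = 0..l-1) is d_{l-i}. *)

Definition strval (b l : nat) (X : l.-tuple 'I_b) : nat :=
  \sum_(i < l) (tnth X i : nat) * b ^ (l.-1 - i).

Definition mu_term (R : realType) (b : nat) (d : 'I_b) (k : nat) (A : set R)
    (l : nat) : R :=
  \sum_(X : l.-tuple 'I_b | count_mem d X == k)
     ((b%:R ^- l) * \1_A ((strval X)%:R / b%:R ^+ l)).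

Definition mu (R : realType) (b : nat) (d : 'I_b) (k : nat) (A : set R)
  : \bar R :=
  (\sum_(0 <= l <oo) (mu_term d k A l)%:E)%E.

Definition ilength (R : realType) (I : interval R) : R :=
  sup [set` I] - inf [set` I].

From HB Require Import structures.
From mathcomp Require Import all_boot all_order all_algebra.
From mathcomp Require Import all_classical all_reals all_analysis.
From mathcomp Require Import zify ring lra.
Import Order.TTheory GRing.Theory Num.Theory numFieldNormedType.Exports.
Local Open Scope ring_scope.
Local Open Scope classical_set_scope.

(* Prepending a digit e to a string X moves its point x = n(X)/b^|X| to
   (e + x)/b, so sorting strings by their leading digit gives the self-similarity
     mu_k(A) = [k = 0] 1_A(0) + b^-1 sum_e mu_(k - [e = d]) ((e + .)/b)^-1(A).
   Every map y |-> (e + y)/b sends [0,1) into itself, hence mu_k[0,1) = b for all k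
   once the mass is known to be finite.  For a cell [j/b^n, (j+1)/b^n) only the
   leading digit floor(j/b^(n-1)) contributes, so by induction on n each cell has
   mass b^(1-n) as soon as n <= k, and additivity gives the first claim.  An
   interval is squeezed between unions of cells of level k, whence
   |mu_k(I) - b|I|| <= 2 b^(1-k), which tends to 0 because b >= 2. *)

Lemma big_tupleS (R : Type) (idx : R) (op : Monoid.com_law idx) (T : finType)
    l (P : pred (l.+1.-tuple T)) (F : l.+1.-tuple T -> R) :
  \big[op/idx]_(X | P X) F X =
  \big[op/idx]_(e : T) \big[op/idx]_(Y | P (cons_tuple e Y)) F (cons_tuple e Y).
Proof.
rewrite pair_big_dep /= (reindex (fun p => cons_tuple p.1 p.2)) //=.
exists (fun X => (thead X, behead_tuple X)) => [[e Y] _|X _] /=.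
  by rewrite theadE; congr pair; apply: val_inj.
by rewrite [RHS]tuple_eta.
Qed.

Lemma sumr_ifeq (V : nmodType) (T : finType) (j : T) (x y : V) :
  \sum_(i : T) (if i == j then x else y) = x + y *+ #|T|.-1.
Proof.
rewrite (bigD1 j) //= eqxx (eq_bigr (fun=> y)) => [|i /negbTE -> //].
by rewrite sumr_const cardC1.
Qed.

Section DigitStrings.
Variable b : nat.

Lemma strval_cons l (e : 'I_b) (Y : l.-tuple 'I_b) :
  strval (cons_tuple e Y) = (e * b ^ l + strval Y)%N.
Proof.
rewrite /strval big_ord_recl subn0; congr (_ + _)%N.
apply: eq_bigr => i _; rewrite /bump /= subnDA subn1.
by rewrite !(tnth_nth e).
Qed.

Lemma strval_lt l (X : l.-tuple 'I_b) : (strval X < b ^ l)%N.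
Proof.
elim: l X => [|l IH] X; first by rewrite /strval big_ord0.
case/tupleP: X => e Y; rewrite strval_cons expnS.
have := IH Y; have := ltn_ord e; nia.
Qed.

End DigitStrings.

Lemma sub_itvcc_inf_sup {R : realType} (S : set R) :
  S !=set0 -> has_lbound S -> has_ubound S -> S `<=` `[inf S, sup S].
Proof.
move=> S0 S_lb S_ub x Sx; rewrite /= in_itv /= sup_upper_bound // ?andbT.
exact: ge_inf.
Qed.

Lemma itvoo_inf_sup_sub {R : realType} (I : interval R) :
  has_lbound [set` I] -> has_ubound [set` I] -> `]inf [set` I], sup [set` I][ `<=` [set` I].
Proof.
move=> I_lb I_ub x; rewrite /= in_itv /= => x_in.
suff : ([set` I] : set R)° x by exact: interior_subset.
by rewrite interval_bounded_interior //; exact: interval_is_interval.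
Qed.

Section DigitMeasures.
Variables (R : realType) (b : nat) (d : 'I_b).

Let b_gt0 : (0 < b)%N := leq_ltn_trans (leq0n d) (ltn_ord d).
Let bR_gt0 : 0 < b%:R :> R. Proof. by rewrite ltr0n. Qed.
Let bX_gt0 n : 0 < b%:R ^+ n :> R. Proof. by rewrite exprn_gt0. Qed.

Definition digit_shift (e : nat) (y : R) : R := (e%:R + y) / b%:R.

Lemma strval_ratio_cons l (e : 'I_b) (Y : l.-tuple 'I_b) :
  (strval (cons_tuple e Y))%:R / b%:R ^+ l.+1 =
  digit_shift e ((strval Y)%:R / b%:R ^+ l) :> R.
Proof.
rewrite /digit_shift strval_cons natrD natrM natrX exprS.
by field; rewrite !gt_eqF.
Qed.

Lemma strval_ratio_itv l (X : l.-tuple 'I_b) :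
  (`[0, 1[ : set R) ((strval X)%:R / b%:R ^+ l).
Proof.
rewrite /= in_itv /= divr_ge0 // ltr_pdivrMr // mul1r -natrX ltr_nat.
exact: strval_lt.
Qed.

Lemma mu_term_ge0 k (A : set R) l : 0 <= mu_term d k A l.
Proof. by apply: sumr_ge0 => X _; rewrite mulr_ge0 ?invr_ge0 ?exprn_ge0. Qed.

Lemma mu_ge0 k (A : set R) : (0 <= mu d k A)%E.
Proof. by apply: nneseries_ge0 => l _ _; rewrite lee_fin mu_term_ge0. Qed.

Lemma mu_term0 k (A : set R) : mu_term d k A 0 = (k == 0)%:R * \1_A 0.
Proof.
rewrite /mu_term big_mkcond (big_pred1 [tuple]) => [|X]; last by rewrite [X]tuple0 /= eqxx.
rewrite /= eq_sym /strval big_ord0 expr0 invr1 !mul1r mul0r.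
by case: (k == 0)%N; rewrite ?mul0r ?mul1r.
Qed.

Lemma mu_termS k (A : set R) l :
  mu_term d k A l.+1 = b%:R^-1 * \sum_(e : 'I_b)
    (if e == d then (if (k == 0)%N then 0 else mu_term d k.-1 (digit_shift e @^-1` A) l)
     else mu_term d k (digit_shift e @^-1` A) l).
Proof.
have cons_term (e : 'I_b) (Y : l.-tuple 'I_b) :
    b%:R ^- l.+1 * \1_A ((strval (cons_tuple e Y))%:R / b%:R ^+ l.+1) =
    b%:R^-1 * (b%:R ^- l * \1_(digit_shift e @^-1` A) ((strval Y)%:R / b%:R ^+ l)) :> R.
  by rewrite strval_ratio_cons exprS invfM mulrA.
rewrite /mu_term big_tupleS mulr_sumr; apply: eq_bigr => e _.
case: (eqVneq e d) => [-> | /negbTE ne] /=; last first.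
  by rewrite mulr_sumr; apply: eq_big => Y; rewrite ?ne ?cons_term.
case: k => [|k] /=; first by rewrite big_pred0 ?mulr0 // => Y; rewrite eqxx.
by rewrite mulr_sumr; apply: eq_big => Y; rewrite ?eqxx ?cons_term.
Qed.

Lemma mu_prepend k (A : set R) :
  mu d k A = ((mu_term d k A 0)%:E + (b%:R^-1)%:E * \sum_(e : 'I_b)
    (if e == d then (if (k == 0)%N then 0 else mu d k.-1 (digit_shift e @^-1` A))
     else mu d k (digit_shift e @^-1` A)))%E.
Proof.
have term_ge0 (A' : set R) k' l : (0 <= (mu_term d k' A' l)%:E)%E.
  by rewrite lee_fin mu_term_ge0.
have summand_ge0 (e : 'I_b) l : (0 <= (if e == d then
    (if (k == 0)%N then 0 else mu_term d k.-1 (digit_shift e @^-1` A) l)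
    else mu_term d k (digit_shift e @^-1` A) l)%:E)%E.
  by case: ifP => _; [case: ifP => _|]; rewrite ?term_ge0.
rewrite /mu nneseries_recl // -(nneseries_addn 1) //; congr (_ + _)%E.
under eq_eseriesr => l _ do rewrite addn1 mu_termS EFinM -sumEFin.
rewrite nneseriesZl => [|l _]; last exact: sume_ge0.
rewrite nneseries_sum //; congr (_ * _)%E; apply: eq_bigr => e _.
by case: ifP => // _; case: ifP => // _; rewrite eseries0.
Qed.

Lemma mu_term_le k (A B : set R) l :
  A `&` `[0, 1[ `<=` B -> mu_term d k A l <= mu_term d k B l.
Proof.
move=> AB; apply: ler_sum => X _; rewrite ler_wpM2l ?invr_ge0 ?exprn_ge0 //.
rewrite /indic ler_nat; case: (boolP (_ \in A)) => // /set_mem Ax.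
by rewrite mem_set //; apply: AB; split => //; exact: strval_ratio_itv.
Qed.

Lemma mu_term_ext k (A B : set R) l :
  A `&` `[0, 1[ = B `&` `[0, 1[ -> mu_term d k A l = mu_term d k B l.
Proof.
move=> AB; apply/le_anti/andP; split; apply: mu_term_le.
  by rewrite AB => x [].
by rewrite -AB => x [].
Qed.

Lemma mu_le k (A B : set R) : A `&` `[0, 1[ `<=` B -> (mu d k A <= mu d k B)%E.
Proof.
move=> AB; apply: lee_nneseries => l _; first by rewrite lee_fin mu_term_ge0.
by rewrite lee_fin mu_term_le.
Qed.

Lemma mu_ext k (A B : set R) :
  A `&` `[0, 1[ = B `&` `[0, 1[ -> mu d k A = mu d k B.
Proof. by move=> AB; apply: eq_eseriesr => l _; rewrite (mu_term_ext _ _ _ _ AB). Qed.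

Lemma mu_eq0 k (A : set R) : A `&` `[0, 1[ = set0 -> mu d k A = 0%E.
Proof.
move=> A0; rewrite (@mu_ext _ _ set0) ?set0I // /mu eseries0 // => l _ _.
by rewrite /mu_term big1 // => X _; rewrite indicE in_set0 mulr0.
Qed.

Lemma mu_setU k (A B : set R) :
  [disjoint A & B] -> mu d k (A `|` B) = (mu d k A + mu d k B)%E.
Proof.
move=> AB; rewrite /mu -nneseriesD => [|l _ _|l _ _]; rewrite ?lee_fin ?mu_term_ge0 //.
apply: eq_eseriesr => l _; rewrite -EFinD -big_split; congr (_%:E).
apply: eq_bigr => X _ /=; rewrite -mulrDr !indicE in_setU; congr (_ * _).
set x := _ / _; have [xA|_] := boolP (x \in A); last by rewrite add0r.
suff /negbTE -> : x \notin B by rewrite addr0.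
apply/negP => /set_mem xB; have : (A `&` B) x by split => //; apply: set_mem.
by rewrite (disj_set2P AB).
Qed.

Lemma digit_shift_itv (e : 'I_b) : `[0, 1[ `<=` digit_shift e @^-1` `[0, 1[.
Proof.
move=> y /=; rewrite !in_itv /= => /andP[y0 y1].
have : e%:R + 1 <= b%:R :> R by rewrite natr1 ler_nat.
by rewrite divr_ge0 ?addr_ge0 //= ltr_pdivrMr // mul1r; lra.
Qed.

Lemma digit_shift_setI01 (e : 'I_b) :
  digit_shift e @^-1` `[0, 1[ `&` `[0, 1[ = `[0, 1[ `&` `[0, 1[.
Proof. by rewrite setIid; apply: setIidr; exact: digit_shift_itv. Qed.

Lemma mu_term01_0 k : mu_term d k (`[0, 1[ : set R) 0 = (k == 0)%:R.
Proof. by rewrite mu_term0 indicE mem_set ?mulr1 //= in_itv /= lexx ltr01. Qed.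

Lemma mu_term01S k l :
  mu_term d k (`[0, 1[ : set R) l.+1 = b%:R^-1 *
    ((if (k == 0)%N then 0 else mu_term d k.-1 `[0, 1[ l)
     + mu_term d k `[0, 1[ l *+ b.-1).
Proof.
rewrite mu_termS; congr (_ * _).
rewrite (eq_bigr (fun e : 'I_b => if e == d
    then (if (k == 0)%N then 0 else mu_term d k.-1 `[0, 1[ l)
    else mu_term d k `[0, 1[ l)) => [|e _]; first by rewrite sumr_ifeq card_ord.
by rewrite !(mu_term_ext _ _ _ _ (digit_shift_setI01 e)).
Qed.

(* The recursion [mu01_rec] below is also solved by +oo; these partial sums rule it out. *)
Lemma sum_mu_term01_le n k : \sum_(l < n) mu_term d k (`[0, 1[ : set R) l <= b%:R.
Proof.
have b1 : 1 <= b%:R :> R by rewrite ler1n.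
have bB1 : (b.-1)%:R = b%:R - 1 :> R by rewrite -subn1 natrB.
elim: n k => [|n IH] k; first by rewrite big_ord0 ler0n.
rewrite big_ord_recl mu_term01_0.
under eq_bigr => l _ do rewrite mu_term01S.
rewrite -mulr_sumr big_split /= sumrMnl -[_ *+ b.-1]mulr_natr bB1 mulrDr mulrA.
have scaled_le k' : b%:R^-1 * \sum_(l < n) mu_term d k' (`[0, 1[ : set R) l <= 1.
  by rewrite mulrC ler_pdivrMr // mul1r.
case: k => [|k] /=.
  by rewrite big1_eq mulr0 add0r; have := scaled_le 0%N; nra.
by have := scaled_le k; have := scaled_le k.+1; nra.
Qed.

Lemma mu01_fin_num k : mu d k (`[0, 1[ : set R) \is a fin_num.
Proof.
rewrite ge0_fin_numE ?mu_ge0 //; apply: (@le_lt_trans _ _ b%:R%:E); last exact: ltry.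
apply: lime_le; first by apply: is_cvg_nneseries => l _ _; rewrite lee_fin mu_term_ge0.
by apply: nearW => n /=; rewrite sumEFin lee_fin big_mkord sum_mu_term01_le.
Qed.

Lemma mu01_rec k : mu d k (`[0, 1[ : set R) = ((k == 0)%:R%:E + (b%:R^-1)%:E *
    ((if (k == 0)%N then 0 else mu d k.-1 `[0%R, 1%R[) + mu d k `[0%R, 1%R[ *+ b.-1))%E.
Proof.
rewrite {1}mu_prepend mu_term01_0; congr (_ + _ * _)%E.
rewrite (eq_bigr (fun e : 'I_b => if e == d
    then (if (k == 0)%N then 0%E else mu d k.-1 `[0, 1[)
    else mu d k `[0, 1[)) => [|e _]; first by rewrite sumr_ifeq card_ord.
by rewrite !(mu_ext _ _ _ (digit_shift_setI01 e)).
Qed.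

Lemma mu01 k : mu d k (`[0, 1[ : set R) = b%:R%:E.
Proof.
have fixed_point (u v x : R) : x = u + b%:R^-1 * (v + x *+ b.-1) -> x = b%:R * u + v.
  rewrite -[x *+ _]mulr_natr -subn1 natrB // => xE.
  have : b%:R * x = b%:R * u + v + (b%:R - 1) * x.
    by rewrite {1}xE; field; exact: lt0r_neq0.
  nra.
elim: k => [|k IH]; [have := mu01_rec 0 | have := mu01_rec k.+1];
  rewrite /= ?IH -(fineK (mu01_fin_num _)) -EFin_natmul ?add0e -?EFinD -?EFinM -?EFinD => -[].
  by rewrite -[_ *+ b.-1]add0r => /fixed_point ->; rewrite mulr1 addr0.
by rewrite -[b%:R^-1 * _]add0r => /fixed_point ->; rewrite mulr0 add0r.
Qed.

Definition cell (x : R) (n : nat) : set R := `[x / b%:R ^+ n, (x + 1) / b%:R ^+ n[.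

Lemma in_cell x n y : cell x n y <-> x <= y * b%:R ^+ n < x + 1.
Proof. by rewrite /cell /= in_itv /= ler_pdivrMr // ltr_pdivlMr. Qed.

Lemma digit_shift_cell (e : nat) x n :
  digit_shift e @^-1` cell x n.+1 = cell (x - e%:R * b%:R ^+ n) n.
Proof.
have shiftE y : digit_shift e y * b%:R ^+ n.+1 = e%:R * b%:R ^+ n + y * b%:R ^+ n.
  by rewrite /digit_shift exprS; field; exact: lt0r_neq0.
by apply/seteqP; split => y /=; rewrite !in_cell shiftE => /andP[? ?]; apply/andP; lra.
Qed.

Lemma cell_setI01_eq0 x n : x + 1 <= 0 \/ b%:R ^+ n <= x -> cell x n `&` `[0, 1[ = set0.
Proof.
move=> x_out; apply/seteqP; split => // y [/in_cell/andP[xy yx]] /=.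
rewrite in_itv /= => /andP[y0 y1].
have : 0 <= y * b%:R ^+ n < b%:R ^+ n by rewrite mulr_ge0 //= gtr_pMl.
by case/andP; case: x_out; lra.
Qed.

Lemma mu_cell n k j : (n <= k)%N -> (j < b ^ n)%N ->
  mu d k (cell j%:R n) = (b%:R / b%:R ^+ n)%:E.
Proof.
elim: n k j => [|n IH] k j nk jn.
  move: jn; rewrite expn0 ltnS leqn0 => /eqP ->.
  by rewrite expr0 divr1 -(mu01 k); apply: mu_ext; rewrite /cell !divr1 add0r.
case: k nk => [//|k]; rewrite ltnS => nk.
have bn_gt0 : (0 < b ^ n)%N by rewrite expn_gt0 b_gt0.
have e0_lt : (j %/ b ^ n < b)%N by rewrite ltn_divLR // -expnS.
pose e0 : 'I_b := Ordinal e0_lt.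
have jE : j%:R = e0%:R * b%:R ^+ n + (j %% b ^ n)%:R :> R.
  by rewrite {1}(divn_eq j (b ^ n)) natrD natrM natrX.
have shift_e0 : digit_shift e0 @^-1` cell j%:R n.+1 = cell (j %% b ^ n)%:R n.
  by rewrite digit_shift_cell jE addrAC subrr add0r.
have shift_out (e : 'I_b) k' : e != e0 -> mu d k' (digit_shift e @^-1` cell j%:R n.+1) = 0%E.
  move=> ne; apply: mu_eq0; rewrite digit_shift_cell; apply: cell_setI01_eq0.
  have rem_lt : (j %% b ^ n)%:R + 1 <= b%:R ^+ n :> R by rewrite natr1 -natrX ler_nat ltn_pmod.
  have rem_ge0 : 0 <= (j %% b ^ n)%:R :> R by [].
  rewrite jE; case: (ltngtP e e0) => [e_e0|e_e0|/val_inj e_e0]; last first.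
  - by rewrite e_e0 eqxx in ne.
  - left.
    have : e0%:R + 1 <= e%:R :> R by rewrite natr1 ler_nat.
    have := bX_gt0 n; nra.
  - right; have : e%:R + 1 <= e0%:R :> R by rewrite natr1 ler_nat.
    have := bX_gt0 n; nra.
rewrite mu_prepend mu_term0 mul0r add0e (bigD1 e0) //= big1 => [|e ne]; last first.
  by case: ifP => _; rewrite shift_out.
have r_lt : (j %% b ^ n < b ^ n)%N by rewrite ltn_pmod.
rewrite adde0 shift_e0 (IH k) // (IH k.+1) //; last exact: ltnW.
by case: ifP => _; rewrite -EFinM exprS; congr EFin; field; rewrite !lt0r_neq0.
Qed.

Lemma mu_grid n k p q : (n <= k)%N -> (p <= q <= b ^ n)%N ->
  mu d k `[p%:R / b%:R ^+ n : R, q%:R / b%:R ^+ n[ =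
  (b%:R * (q%:R / b%:R ^+ n - p%:R / b%:R ^+ n))%:E.
Proof.
move=> nk /andP[pq qN]; rewrite -(subnKC pq) in qN *.
elim: (q - p)%N qN => [|m IH] pm_le.
  by rewrite addn0 set_itvco0 subrr mulr0 mu_eq0 ?set0I.
rewrite addnS -natr1 (@itv_bndbnd_setU _ _ _ (BLeft ((p + m)%:R / b%:R ^+ n))); last 2 first.
- by rewrite bnd_simp ler_pM2r ?invr_gt0 // ler_nat leq_addr.
- by rewrite bnd_simp ler_pM2r ?invr_gt0 // lerDl.
rewrite mu_setU; last first.
  by apply/disj_set2P/seteqP; split => // x []; rewrite /= !in_itv /= => /andP[_ /lt_geF ->].
rewrite addnS in pm_le; rewrite IH 1?ltnW //.
rewrite -[X in (_ + mu d k X)%E]/(cell (p + m)%:R n) mu_cell // -EFinD.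
by congr EFin; field; exact: lt0r_neq0.
Qed.

Lemma mu_bimal_itv (t u : R) n k : 0 <= t -> t < u -> u <= 1 ->
  (exists z : int, b%:R ^+ n * t = z%:~R) ->
  (exists z : int, b%:R ^+ n * u = z%:~R) ->
  (n <= k)%N -> mu d k `[t, u[ = (b%:R * (u - t))%:E.
Proof.
have grid_point (x : R) : 0 <= x -> (exists z : int, b%:R ^+ n * x = z%:~R) ->
    exists p : nat, x = p%:R / b%:R ^+ n.
  move=> x0 [z xE]; have /natrP[p pE] : b%:R ^+ n * x \is a Num.nat.
    by rewrite Num.Theory.natrEint mulr_ge0 // andbT xE intr_int.
  by exists p; rewrite -pE mulrAC divff ?mul1r // lt0r_neq0.
move=> t0 tu u1 /(grid_point _ t0)[p tE] /(grid_point _ (le_trans t0 (ltW tu)))[q uE] nk.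
subst t u; rewrite mu_grid //; move: tu u1.
by rewrite ltr_pM2r ?ler_pdivrMr ?invr_gt0 // mul1r -natrX ler_nat ltr_nat => /ltnW -> ->.
Qed.

Lemma mu_le_itvcc (S : set R) a c n k : (n <= k)%N -> 0 <= a <= c -> a < 1 ->
  S `<=` `[a, c] -> (mu d k S <= (b%:R * (c - a) + 2 * b%:R / b%:R ^+ n)%:E)%E.
Proof.
move=> nk /andP[a0 ac] a1 S_hull; set N := b%:R ^+ n.
have N_gt0 : 0 < N := bX_gt0 n.
have aN0 : 0 <= a * N by rewrite mulr_ge0 // ltW.
have cN0 : 0 <= c * N by rewrite mulr_ge0 ?(le_trans a0 ac) // ltW.
set p := Num.truncn (a * N); set q := minn (Num.truncn (c * N)).+1 (b ^ n)%N.
have p_gt : a * N < p%:R + 1 by rewrite natr1 truncnS_gt.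
have q_le : q%:R <= c * N + 1.
  apply: (@le_trans _ _ (Num.truncn (c * N)).+1%:R); first by rewrite ler_nat geq_minl.
  by rewrite -natr1 lerD2r truncn_le.
have pq : (p <= q <= b ^ n)%N.
  rewrite geq_minr andbT leq_min; apply/andP; split.
    by apply/leqW/le_truncn; rewrite ler_pM2r.
  by rewrite ltnW // truncn_lt_nat // natrX -[ltRHS]mul1r ltr_pM2r.
apply: (@le_trans _ _ (mu d k `[p%:R / N, q%:R / N[)).
  apply: mu_le => x [/S_hull]; rewrite /= !in_itv /= => /andP[ax xc] /andP[x0 x1].
  rewrite ler_pdivrMr // ltr_pdivlMr //.
  rewrite (@le_trans _ _ (a * N)) ?truncn_le ?ler_pM2r //=.
  have xN0 : 0 <= x * N by rewrite mulr_ge0 // ltW.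
  rewrite -truncn_lt_nat // ltn_min ltnS le_truncn ?ler_pM2r //=.
  by rewrite truncn_lt_nat // natrX -[ltRHS]mul1r ltr_pM2r.
rewrite mu_grid // lee_fin.
have -> : b%:R * (q%:R / N - p%:R / N) = b%:R / N * (q%:R - p%:R) by field; exact: lt0r_neq0.
have -> : b%:R * (c - a) + 2 * b%:R / N = b%:R / N * (c * N - a * N + 2).
  by field; exact: lt0r_neq0.
by rewrite ler_pM2l ?divr_gt0 //; lra.
Qed.

Lemma mu_ge_itvoo (S : set R) a c n k : (n <= k)%N -> 0 <= a -> c <= 1 ->
  `]a, c[ `<=` S -> ((b%:R * (c - a) - 2 * b%:R / b%:R ^+ n)%:E <= mu d k S)%E.
Proof.
move=> nk a0 c1 core_S; set N := b%:R ^+ n.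
have N_gt0 : 0 < N := bX_gt0 n.
have aN0 : 0 <= a * N by rewrite mulr_ge0 // ltW.
set p := (Num.truncn (a * N)).+1; set q := Num.truncn (c * N).
have p_le : p%:R <= a * N + 1 by rewrite -natr1 lerD2r truncn_le.
have q_gt : c * N < q%:R + 1 by rewrite natr1 truncnS_gt.
have error_ge : b%:R * (c - a) - 2 * b%:R / N = b%:R / N * (c * N - a * N - 2).
  by field; exact: lt0r_neq0.
have [qp|pq] := ltnP q p.
  apply: le_trans (mu_ge0 _ _); rewrite lee_fin error_ge pmulr_rle0 ?divr_gt0 //.
  by move: qp; rewrite -(ltr_nat R) -natr1; lra.
have q_le : (q <= b ^ n)%N.
  rewrite truncn_le_nat -natr1 natrX (@le_lt_trans _ _ N) ?ltrDl //.
  by rewrite -[leRHS]mul1r ler_pM2r.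
have cN_ge1 : 1 <= c * N by rewrite -truncn_gt0 (leq_trans _ pq).
apply: (@le_trans _ _ (mu d k `[p%:R / N, q%:R / N[)); last first.
  apply: mu_le => x []; rewrite /= in_itv /= ler_pdivrMr // ltr_pdivlMr // => /andP[px xq] _.
  apply: core_S; rewrite /= in_itv /=; apply/andP; split.
    by rewrite -(ltr_pM2r N_gt0); apply: lt_le_trans px; exact: truncnS_gt.
  by rewrite -(ltr_pM2r N_gt0); apply: lt_le_trans xq _; rewrite truncn_le; lra.
rewrite mu_grid ?pq // lee_fin error_ge.
have -> : b%:R * (q%:R / N - p%:R / N) = b%:R / N * (q%:R - p%:R) by field; exact: lt0r_neq0.
by rewrite ler_pM2l ?divr_gt0 //; lra.
Qed.

Lemma mu_cvg_sandwich (S : set R) a c : (1 < b)%N -> 0 <= a <= c -> a < 1 -> c <= 1 ->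
  `]a, c[ `<=` S -> S `<=` `[a, c] ->
  ((fun k => mu d k S) @ \oo --> (b%:R * (c - a))%:E)%E.
Proof.
move=> b_gt1 ac a1 c1 core_S S_hull; have /andP[a0 _] := ac.
have err_cvg : (fun k => 2 * b%:R / b%:R ^+ k : R) @ \oo --> 0.
  rewrite -(mulr0 (2 * b%:R)); apply: cvgMr.
  under eq_fun do rewrite -exprVn; apply: cvg_expr.
  by rewrite ger0_norm ?invr_ge0 // invf_lt1 // ltr1n.
apply: (@squeeze_cvge _ _ _ _ (fun k => (b%:R * (c - a) - 2 * b%:R / b%:R ^+ k)%:E) _
                                (fun k => (b%:R * (c - a) + 2 * b%:R / b%:R ^+ k)%:E)).
- by apply: nearW => k; rewrite mu_ge_itvoo // mu_le_itvcc.
- apply: cvg_EFin; first exact: nearW.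
  by rewrite -[X in _ --> X]subr0; apply: cvgB => //; exact: cvg_cst.
- apply: cvg_EFin; first exact: nearW.
  by rewrite -[X in _ --> X]addr0; apply: cvgD => //; exact: cvg_cst.
Qed.

Lemma mu_itv_cvg (I : interval R) : (1 < b)%N -> [set` I] `<=` `[0, 1[ ->
  ((fun k => mu d k [set` I]) @ \oo --> (b%:R * ilength I)%:E)%E.
Proof.
move=> b_gt1 I01; rewrite /ilength; set S := [set` I].
have [S0|/set0P S_neq0] := eqVneq S set0.
  rewrite S0 sup0 inf0 subrr mulr0; apply: cvg_near_cst; apply: nearW => k.
  by apply: mu_eq0; rewrite set0I.
have S01 x : S x -> 0 <= x < 1 by move/I01; rewrite /= in_itv.
have S_lb : has_lbound S by exists 0 => x /S01/andP[].
have S_ub : has_ubound S by exists 1 => x /S01/andP[_ /ltW].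
have S_hull : S `<=` `[inf S, sup S] by exact: sub_itvcc_inf_sup.
have [x0 /[dup] /S_hull + /S01] := S_neq0; rewrite /= in_itv /= => /andP[ax xc] /andP[_ x1].
apply: mu_cvg_sandwich => //; last exact: itvoo_inf_sup_sub.
- by rewrite (le_trans ax xc) andbT; apply: lb_le_inf => // x /S01/andP[].
- exact: le_lt_trans x1.
- by apply: ge_sup => // x /S01/andP[_ /ltW].
Qed.

End DigitMeasures.

Theorem mainTheorem15 (R : realType) (b : nat) (d : 'I_b) (hb : (2 <= b)%N) :
  (forall (t u : R) (l' : nat),
     0 <= t -> t < u -> u <= 1 ->
     (exists z : int, b%:R ^+ l' * t = z%:~R) ->
     (exists z : int, b%:R ^+ l' * u = z%:~R) ->
     forall k : nat, (l' <= k)%N ->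
       mu d k `[t, u[ = (b%:R * (u - t))%:E)
  /\
  (forall I : interval R, [set` I] `<=` `[0, 1[ ->
     ((fun k => mu d k [set` I]) @ \oo --> (b%:R * ilength I)%:E)%E).
Proof.
split=> [t u l' t0 tu u1 tE uE k lk | I I01].
  exact: (@mu_bimal_itv R b d t u l' k t0 tu u1 tE uE lk).
exact: (@mu_itv_cvg R b d I hb I01).
Qed.
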